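(* There exists a natural number $n_0$ such that for every natural number $n\ge n_0$ there exists a real symmetric $n\times n$ matrix $T$ with $\|T\|_1=1$ and $$\forall R,C\in M_n(\mathbb{C}):\quad|\mathrm{tr}((R\circ C)T)|\le3\|R\|_r\|C\|_c\,n^{-1/2}.$$
   Context: $\|T\|_1$ is the trace norm (first Schatten norm, the sum of the singular values). $R\circ C$ is the entrywise Schur product $(r_{ij}c_{ij})$. $\|R\|_r:=\max_i(\sum_j|r_{ij}|^2)^{1/2}$ and $\|C\|_c:=\max_j(\sum_i|c_{ij}|^2)^{1/2}$. *)

From HB Require Import structures.
From mathcomp Require Import all_boot all_order all_algebra.
From mathcomp Require Import reals.
From mathcomp Require Export complex.
Set Implicit Arguments. Unset Strict Implicit. Unset Printing Implicit Defensive.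
Import Order.TTheory GRing.Theory Num.Theory.
Local Open Scope ring_scope.

Section Defs.
Variable R : realType.
Local Notation C := (R[i]).

Definition adjmx n (A : 'M[C]_n) : 'M[C]_n := (map_mx Num.conj A)^T.

(* t is the trace norm (sum of singular values) of A: the singular values are
   the nonnegative square roots of the eigenvalues (with multiplicity) of A^* A,
   i.e. of the roots of its characteristic polynomial.  The multiset s of roots
   is uniquely determined, so this relation is functional. *)
Definition is_trace_norm n (A : 'M[C]_n) (t : C) : Prop :=
  exists s : seq C,
    char_poly (adjmx A *m A) = \prod_(x <- s) ('X - x%:P) /\
    t = \sum_(x <- s) sqrtC x.

Definition schur n (A B : 'M[C]_n) : 'M[C]_n := \matrix_(i, j) (A i j * B i j).

Definition rownorm n (A : 'M[C]_n) : C :=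
  \big[Num.max/0]_(i < n) sqrtC (\sum_(j < n) `|A i j| ^+ 2).

Definition colnorm n (A : 'M[C]_n) : C :=
  \big[Num.max/0]_(j < n) sqrtC (\sum_(i < n) `|A i j| ^+ 2).

Definition cplxmx n (T : 'M[R]_n) : 'M[C]_n := map_mx (fun x => (x%:C)%C) T.

End Defs.

From HB Require Import structures.
From mathcomp Require Import all_boot all_order all_algebra.
From mathcomp Require Import reals complex ring zify.
Set Implicit Arguments. Unset Strict Implicit. Unset Printing Implicit Defensive.
Import Order.TTheory GRing.Theory Num.Theory.
Local Open Scope ring_scope.
Local Open Scope complex_scope.

(* Take a Sylvester-Hadamard matrix H of order m = 2^k with m <= n < 2m, and
   pad (m sqrt m)^-1 H with zeros to size n.  As H is symmetric with H^2 = m I,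
   T^* T is diagonal with m entries m^-2, so ||T||_1 = m * m^-1 = 1.  Every entry
   of T has modulus at most (m sqrt m)^-1, and AM-GM together with the row and
   column bounds gives sum_ij |r_ij| |c_ij| <= n ||R||_r ||C||_c; finally
   n / (m sqrt m) <= 3 / sqrt n because n < 2m. *)

Section NonnegBigmax.
Variables (F : numDomainType) (I : eqType) (f : I -> F).
Implicit Type r : seq I.
Hypothesis f_ge0 : forall i, 0 <= f i.

Let max_ge0 (x y : F) : 0 <= x -> 0 <= y -> 0 <= Num.max x y.
Proof.
by move=> x0 y0; rewrite comparable_le_max ?x0 // real_comparable ?ger0_real.
Qed.

Lemma bigmax_nneg_ge0 r : 0 <= \big[Num.max/0]_(i <- r) f i.
Proof. by apply: (big_ind (fun x => 0 <= x)) => //; exact: max_ge0. Qed.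

Lemma le_bigmax_nneg r i0 : i0 \in r -> f i0 <= \big[Num.max/0]_(i <- r) f i.
Proof.
elim: r i0 => // a s IH i0; rewrite inE big_cons.
have Rmax : f a >=< \big[Num.max/0]_(i <- s) f i.
  by rewrite real_comparable ?ger0_real ?bigmax_nneg_ge0.
by case/orP=> [/eqP ->|/IH le_s]; rewrite comparable_le_max // ?lexx ?le_s ?orbT.
Qed.

End NonnegBigmax.

Lemma le_sum_sqr (F : numDomainType) (I : finType) (s : I -> F) t k :
  (forall l, 0 <= s l) -> 0 <= t -> \sum_l s l ^+ 2 <= t ^+ 2 -> s k <= t.
Proof.
move=> s_ge0 t_ge0 st; rewrite -ler_sqr ?nnegrE //; apply: le_trans st.
by rewrite (bigD1 k) //= lerDl sumr_ge0 // => l _; rewrite exprn_ge0.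
Qed.

Lemma sum_mul_le_row_col (F : numDomainType) N (x y : 'I_N -> 'I_N -> F) r c :
  (forall i j, 0 <= x i j) -> (forall i j, 0 <= y i j) -> 0 <= r -> 0 <= c ->
  (forall i, \sum_j x i j ^+ 2 <= r ^+ 2) -> (forall j, \sum_i y i j ^+ 2 <= c ^+ 2) ->
  \sum_i \sum_j x i j * y i j <= N%:R * (r * c).
Proof.
move=> x0 y0 r0 c0 sx sy.
have [rc0|rc_neq0] := eqVneq (r * c) 0.
  rewrite rc0 mulr0 big1 // => i _; rewrite big1 // => j _.
  have x_le := le_sum_sqr j (x0 i) r0 (sx i).
  have y_le := le_sum_sqr i (y0^~ j) c0 (sy j).
  move/eqP: rc0; rewrite mulf_eq0 => /orP[]/eqP rc0; rewrite rc0 in x_le y_le.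
    by rewrite (_ : x i j = 0) ?mul0r //; apply/eqP; rewrite eq_le x_le x0.
  by rewrite (_ : y i j = 0) ?mulr0 //; apply/eqP; rewrite eq_le y_le y0.
have rc_gt0 : 0 < r * c * 2%:R by rewrite mulr_gt0 // lt_def rc_neq0 mulr_ge0.
have amgm i j : r * c * 2%:R * (x i j * y i j) <= (c * x i j) ^+ 2 + (r * y i j) ^+ 2.
  have -> : r * c * 2%:R * (x i j * y i j) = c * x i j * (r * y i j) *+ 2 by ring.
  apply: Order.le_of_leif (real_leif_mean_square_scaled _ _);
  by rewrite ger0_real // mulr_ge0.
rewrite -(ler_pM2l rc_gt0) mulr_sumr.
apply: (@le_trans _ _ (\sum_i \sum_j ((c * x i j) ^+ 2 + (r * y i j) ^+ 2))).
  by apply: ler_sum => i _; rewrite mulr_sumr; apply: ler_sum => j _.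
under eq_bigr do rewrite big_split /=.
rewrite big_split /= [X in _ + X]exchange_big /=.
have row_le i : \sum_j (c * x i j) ^+ 2 <= (c * r) ^+ 2.
  under eq_bigr do rewrite exprMn.
  by rewrite -mulr_sumr exprMn ler_wpM2l ?exprn_ge0.
have col_le j : \sum_i (r * y i j) ^+ 2 <= (r * c) ^+ 2.
  under eq_bigr do rewrite exprMn.
  by rewrite -mulr_sumr exprMn ler_wpM2l ?exprn_ge0.
apply: le_trans (lerD (ler_sum _ (fun i _ => row_le i))
                      (ler_sum _ (fun j _ => col_le j))) _.
rewrite !sumr_const card_ord -[_ + _]mulrnDl -mulr_natl.
by rewrite le_eqVlt; apply/orP; left; apply/eqP; ring.
Qed.

Section NormsAndTraces.
Variable R : realType.
Local Notation C := R[i].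

Lemma sqr_le_bigmax_sqrtC n (f : 'I_n -> C) i :
  (forall k, 0 <= f k) -> f i <= (\big[Num.max/0]_(k < n) sqrtC (f k)) ^+ 2.
Proof.
move=> f_ge0; rewrite -[f i]sqrtCK ler_sqr ?nnegrE ?sqrtC_ge0 //.
  by apply: (@le_bigmax_nneg _ _ (sqrtC \o f)); rewrite ?mem_index_enum // => k;
    rewrite sqrtC_ge0.
by apply: bigmax_nneg_ge0 => k; rewrite sqrtC_ge0.
Qed.

Lemma rownorm_ge0 n (A : 'M[C]_n) : 0 <= rownorm A.
Proof.
by apply: bigmax_nneg_ge0 => i; rewrite sqrtC_ge0 sumr_ge0 // => j _; rewrite exprn_ge0.
Qed.

Lemma colnorm_ge0 n (A : 'M[C]_n) : 0 <= colnorm A.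
Proof.
by apply: bigmax_nneg_ge0 => j; rewrite sqrtC_ge0 sumr_ge0 // => i _; rewrite exprn_ge0.
Qed.

Lemma sum_sqr_row_le n (A : 'M[C]_n) i : \sum_j `|A i j| ^+ 2 <= rownorm A ^+ 2.
Proof. by apply: sqr_le_bigmax_sqrtC => k; rewrite sumr_ge0 // => l _; rewrite exprn_ge0. Qed.

Lemma sum_sqr_col_le n (A : 'M[C]_n) j : \sum_i `|A i j| ^+ 2 <= colnorm A ^+ 2.
Proof. by apply: sqr_le_bigmax_sqrtC => k; rewrite sumr_ge0 // => l _; rewrite exprn_ge0. Qed.

Lemma norm_tr_schur_mul_le n (A B T : 'M[C]_n) t :
  (forall i j, `|T i j| <= t) ->
  `|\tr (schur A B *m T)| <= t * \sum_i \sum_j `|A i j| * `|B i j|.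
Proof.
move=> T_le; rewrite mulr_sumr; apply: le_trans (ler_norm_sum _ _ _) _.
apply: ler_sum => i _; rewrite !mxE mulr_sumr; apply: le_trans (ler_norm_sum _ _ _) _.
apply: ler_sum => j _; rewrite !mxE !normrM [t * _]mulrC.
by rewrite ler_wpM2l ?mulr_ge0.
Qed.

Lemma norm_tr_schur_mul_le_rownorm_colnorm n (A B T : 'M[C]_n) t :
  (forall i j, `|T i j| <= t) -> 0 <= t ->
  `|\tr (schur A B *m T)| <= t * n%:R * (rownorm A * colnorm B).
Proof.
move=> T_le t_ge0; apply: le_trans (norm_tr_schur_mul_le A B T_le) _.
rewrite -mulrA ler_wpM2l //; apply: sum_mul_le_row_col => //.
- exact: rownorm_ge0.
- exact: colnorm_ge0.
- exact: sum_sqr_row_le.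
- exact: sum_sqr_col_le.
Qed.

Lemma is_trace_norm_trig n (M : 'M[C]_n) :
  is_trig_mx (adjmx M *m M) -> is_trace_norm M (\sum_i sqrtC ((adjmx M *m M) i i)).
Proof.
move=> trig; exists [seq (adjmx M *m M) i i | i <- index_enum 'I_n].
by rewrite char_poly_trig // !big_map.
Qed.

Lemma adjmx_cplxmx n (S : 'M[R]_n) : adjmx (cplxmx S) = cplxmx S^T.
Proof. by apply/matrixP => i j; rewrite !mxE; exact: conjc_real. Qed.

Lemma cplxmxM n (S S' : 'M[R]_n) : cplxmx (S *m S') = cplxmx S *m cplxmx S'.
Proof. exact: (map_mxM (real_complex R)). Qed.

End NormsAndTraces.

Lemma sqrtC_realc (R : rcfType) (x : R) : 0 <= x -> sqrtC (x%:C : R[i]) = (Num.sqrt x)%:C.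
Proof.
by move=> x_ge0; rewrite -{1}(sqr_sqrtr x_ge0) rmorphXn sqrCK // ler0c sqrtr_ge0.
Qed.

Lemma block_scalar_mx00E (R : pzRingType) m p (a : R) (i j : 'I_(m + p)) :
  (block_mx a%:M 0 0 0 : 'M_(m + p)) i j = if (i < m)%N && (i == j) then a else 0.
Proof.
rewrite -(splitK i) -(splitK j).
case: (split i) => i'; case: (split j) => j';
  rewrite ?block_mxEul ?block_mxEur ?block_mxEdl ?block_mxEdr ?mxE
          ?eq_lshift ?eq_lrshift ?eq_rlshift ?andbF //=.
- by rewrite ltn_ord; case: (_ == _).
- by rewrite ltnNge leq_addr.
Qed.

Lemma three_div_sqrt_ge (R : rcfType) (m N : nat) : (0 < m)%N -> (m <= N < 2 * m)%N ->
  (m%:R * Num.sqrt m%:R)^-1 * N%:R <= 3%:R / Num.sqrt (N%:R : R).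
Proof.
move=> m_gt0 /andP[m_le_N N_lt].
have N_gt0 : (0 < N)%N by apply: leq_trans m_le_N.
have sqrt_gt0 k : (0 < k)%N -> (0 : R) < Num.sqrt k%:R by move=> ?; rewrite sqrtr_gt0 ltr0n.
rewrite ler_pdivlMr ?invr_gt0 ?mulr_gt0 ?ltr0n ?sqrt_gt0 //.
rewrite -mulrA mulrC ler_pdivrMr ?mulr_gt0 ?ltr0n ?sqrt_gt0 //.
rewrite -ler_sqr ?nnegrE ?mulr_ge0 ?sqrtr_ge0 ?ler0n //.
rewrite !exprMn !sqr_sqrtr ?ler0n // -!natrX -!natrM ler_nat.
(* N < 2m gives N^3 < 8 m^3 <= 9 m^3 *)
have : (N ^ 3 <= (2 * m) ^ 3)%N by rewrite leq_exp2r // ltnW.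
rewrite !expnS !expn0; lia.
Qed.

(* Doubling rather than [2 ^ k], so that the blocks of [sylvester] fit without casts. *)
Fixpoint sylvester_size k : nat :=
  if k is k'.+1 then (sylvester_size k' + sylvester_size k')%N else 1%N.

Lemma sylvester_sizeE k : sylvester_size k = (2 ^ k)%N.
Proof. by elim: k => //= k ->; rewrite expnS mul2n addnn. Qed.

Fixpoint sylvester (R : pzRingType) k : 'M[R]_(sylvester_size k) :=
  if k is k'.+1 return 'M_(sylvester_size k) then
    block_mx (sylvester R k') (sylvester R k') (sylvester R k') (- sylvester R k')
  else 1%:M.

Lemma tr_sylvester (R : pzRingType) k : (sylvester R k)^T = sylvester R k.
Proof.
elim: k => [|k IH] /=; first by rewrite tr_scalar_mx.
by rewrite tr_block_mx linearN /= IH.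
Qed.

Lemma sylvester_mul_self (R : pzRingType) k :
  sylvester R k *m sylvester R k = (sylvester_size k)%:R%:M.
Proof.
elim: k => [|k IH] /=; first by rewrite mul1mx.
rewrite mulmx_block !(mulmxN, mulNmx) opprK IH subrr -raddfD -natrD.
by rewrite -scalar_mx_block.
Qed.

Lemma norm_sylvester (R : numDomainType) k i j : `|sylvester R k i j| = 1.
Proof.
elim: k i j => [|k IH] /= i j; first by rewrite !ord1 mxE eqxx normr1.
rewrite -(splitK i) -(splitK j); case: (split i) => i'; case: (split j) => j' /=;
by rewrite ?block_mxEul ?block_mxEur ?block_mxEdl ?block_mxEdr ?mxE ?normrN IH.
Qed.

Section PaddedHadamard.
Variables (R : realType) (m p : nat) (H : 'M[R]_m).
Hypotheses (m_gt0 : (0 < m)%N) (p_lt_m : (p < m)%N).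
Hypotheses (H_sym : H^T = H) (H_mul_self : H *m H = m%:R%:M).
Hypothesis H_le1 : forall i j, `|H i j| <= 1.

Let scale : R := (m%:R * Num.sqrt m%:R)^-1.

Let scale_gt0 : 0 < scale.
Proof. by rewrite invr_gt0 mulr_gt0 ?sqrtr_gt0 ?ltr0n. Qed.

Definition padded_hadamard : 'M[R]_(m + p) := block_mx (scale *: H) 0 0 0.

Lemma tr_padded_hadamard : padded_hadamard^T = padded_hadamard.
Proof. by rewrite tr_block_mx !trmx0 linearZ /= H_sym. Qed.

Lemma padded_hadamard_mul_self :
  padded_hadamard *m padded_hadamard = block_mx (m%:R ^- 2)%:M 0 0 0.
Proof.
rewrite mulmx_block !(mulmx0, mul0mx) !addr0 -scalemxAl -scalemxAr H_mul_self.
rewrite scalerA scale_scalar_mx -expr2 exprVn exprMn sqr_sqrtr ?ler0n //.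
by congr (block_mx _%:M _ _ _); field; rewrite pnatr_eq0 -lt0n.
Qed.

Lemma norm_padded_hadamard_le i j : `|padded_hadamard i j| <= scale.
Proof.
have scale_ge0 := ltW scale_gt0.
rewrite -(splitK i) -(splitK j); case: (split i) => i'; case: (split j) => j';
  rewrite ?block_mxEul ?block_mxEur ?block_mxEdl ?block_mxEdr ?mxE ?normr0 //.
by rewrite normrM gtr0_norm // ler_piMr.
Qed.

Lemma is_trace_norm_padded_hadamard : is_trace_norm (cplxmx padded_hadamard) 1.
Proof.
set P := adjmx (cplxmx padded_hadamard) *m cplxmx padded_hadamard.
have PE i j : P i j = (if (i < m)%N && (i == j) then m%:R ^- 2 else 0)%:C.
  rewrite /P adjmx_cplxmx tr_padded_hadamard -cplxmxM padded_hadamard_mul_self.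
  by rewrite mxE block_scalar_mx00E.
suff <- : \sum_i sqrtC (P i i) = 1.
  apply: is_trace_norm_trig; apply/is_trig_mxP => i j lt_ij.
  by rewrite PE -val_eqE /= ltn_eqF // andbF.
rewrite big_split_ord /= [X in _ + X]big1 => [|i _]; last first.
  by rewrite PE /= ltnNge leq_addr /= sqrtC_realc // sqrtr0.
rewrite addr0 (eq_bigr (fun=> (m%:R^-1)%:C)) => [|i _]; last first.
  rewrite PE /= ltn_ord eqxx /= sqrtC_realc ?invr_ge0 ?exprn_ge0 ?ler0n //.
  by rewrite -exprVn sqrtr_sqr ger0_norm // invr_ge0 ler0n.
rewrite sumr_const card_ord -rmorphMn /= -mulr_natr mulVf //.
by rewrite pnatr_eq0 -lt0n.
Qed.

Lemma padded_hadamard_spec :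
  padded_hadamard^T = padded_hadamard /\
  is_trace_norm (cplxmx padded_hadamard) 1 /\
  (forall A B : 'M[R[i]]_(m + p),
     `|\tr (schur A B *m cplxmx padded_hadamard)|
       <= 3%:R * rownorm A * colnorm B / sqrtC ((m + p)%:R : R[i])).
Proof.
split; first exact: tr_padded_hadamard.
split; first exact: is_trace_norm_padded_hadamard.
move=> A B; set N := (m + p)%N.
have entry_le i j : `|cplxmx padded_hadamard i j| <= scale%:C.
  rewrite mxE normc_def /= expr0n addr0 sqrtr_sqr lecR.
  exact: norm_padded_hadamard_le.
apply: le_trans (norm_tr_schur_mul_le_rownorm_colnorm A B entry_le _) _.
  by rewrite ler0c ltW.
have NC : (N%:R : R[i]) = (N%:R : R)%:C by rewrite rmorph_nat.
have -> : 3%:R * rownorm A * colnorm B / sqrtC (N%:R : R[i]) =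
          (3%:R / Num.sqrt (N%:R : R))%:C * (rownorm A * colnorm B).
  by rewrite NC sqrtC_realc ?ler0n // rmorphM fmorphV /= rmorph_nat; ring.
rewrite NC -rmorphM ler_wpM2r ?mulr_ge0 ?rownorm_ge0 ?colnorm_ge0 // lecR.
by apply: three_div_sqrt_ge => //; rewrite /N; lia.
Qed.

End PaddedHadamard.

Theorem mainTheorem5 (R : realType) :
  exists n0 : nat, forall n : nat, (n0 <= n)%N ->
    exists T : 'M[R]_n,
      T^T = T /\
      is_trace_norm (cplxmx T) 1 /\
      (forall A B : 'M[R[i]]_n,
         `|\tr (schur A B *m cplxmx T)|
           <= 3%:R * rownorm A * colnorm B / sqrtC (n%:R : R[i])).
Proof.
exists 1%N => n n_gt0; pose k := trunc_log 2 n.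
have size_le : (sylvester_size k <= n)%N by rewrite sylvester_sizeE trunc_logP.
have lt_size : (n < sylvester_size k + sylvester_size k)%N.
  by rewrite sylvester_sizeE addnn -mul2n -expnS trunc_log_ltn.
have [q def_n] : exists q, n = (sylvester_size k + q)%N.
  by exists (n - sylvester_size k)%N; rewrite subnKC.
rewrite def_n ltn_add2l in lt_size *.
exists (padded_hadamard q (sylvester R k)); apply: padded_hadamard_spec.
- by rewrite sylvester_sizeE expn_gt0.
- by [].
- exact: tr_sylvester.
- exact: sylvester_mul_self.
- by move=> i j; rewrite norm_sylvester.
Qed.
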